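(* Let $Y$ be a locally compact second countable metric space with a continuous action of $G=\mathrm{SL}_d(\mathbb R)$, let $Y'\subset Y$ be a closed $G$-invariant subset, $0<q<p\le1$ and $y\in Y\setminus Y'$. If $x\in\mathrm{Div}(y,Y',p)$, then for every compact $K\subset Y\setminus Y'$ and every $t>1$ there exists $N$ such that for every integer $M>N$, $$\frac1M\#\{l\in[1,M]\cap\mathbb N:\ g_t^lu(x)y\notin K\}\ge q.$$
   Context: $d=m+n$; $a_1,\dots,a_m>0$, $b_1,\dots,b_n>0$ with $\sum a_i=\sum b_j=1$; $g_t=\mathrm{diag}(t^{a_1},\dots,t^{a_m},t^{-b_1},\dots,t^{-b_n})$ for $t>0$ and $u(x)=\begin{pmatrix}I_m&x\\0&I_n\end{pmatrix}$ for $x\in M_{m\times n}(\mathbb R)$. For $Y,Y'$ as in the claim, $y\in Y\setminus Y'$ and $0<p\le1$, $\mathrm{Div}(y,Y',p)$ is the set of $x\in M_{m\times n}(\mathbb R)$ such that for every compact $K\subset Y\setminus Y'$, $\liminf_{T\to\infty}\frac1T\int_0^T\mathbf 1[g_{e^t}u(x)y\in Y\setminus K]\,dt\ge p$. *)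

From HB Require Import structures.
From mathcomp Require Import all_boot all_order all_algebra.
From mathcomp Require Import all_classical all_reals all_analysis.
Set Implicit Arguments. Unset Strict Implicit. Unset Printing Implicit Defensive.
Import Order.TTheory GRing.Theory Num.Theory.
Import numFieldNormedType.Exports.
Local Open Scope classical_set_scope.
Local Open Scope ring_scope.

Definition gdiag (R : realType) (m n : nat) (a : 'I_m -> R) (b : 'I_n -> R)
  (t : R) : 'M[R]_(m + n) :=
  diag_mx (row_mx (\row_(i < m) (t `^ (a i))) (\row_(j < n) (t `^ (- b j)))).

Definition umat (R : realType) (m n : nat) (x : 'M[R]_(m, n)) : 'M[R]_(m + n) :=
  block_mx 1%:M x 0 1%:M.

Definition SL (R : realType) (d : nat) : set 'M[R]_d := [set g | \det g = 1].

Definition continuous_SL_action (R : realType) (d : nat) (Y : topologicalType)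
  (act : 'M[R]_d -> Y -> Y) : Prop :=
  [/\ forall y, act 1%:M y = y,
      forall g h y, SL g -> SL h -> act (g *m h) y = act g (act h y)
    & {within [set p : 'M[R]_d * Y | SL p.1], continuous (fun p => act p.1 p.2)}].

Definition Div (R : realType) (m n : nat) (a : 'I_m -> R) (b : 'I_n -> R)
  (Y : topologicalType) (act : 'M[R]_(m + n) -> Y -> Y) (Y' : set Y) (y : Y)
  (p : R) : set 'M[R]_(m, n) :=
  [set x | forall K : set Y, compact K -> K `<=` ~` Y' ->
     (p%:E <= limf_einf
        (fun T : R => (T^-1)%:E *
           \int[lebesgue_measure]_(s in [set s : R | (0 <= s <= T)%R])
              (\1_[set s : R | ~ K (act (gdiag a b (expR s) *m umat x) y)] s : R)%:E)%E
        (pinfty_nbhs R))%E].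

From HB Require Import structures.
From mathcomp Require Import all_boot all_order all_algebra.
From mathcomp Require Import all_classical all_reals all_analysis.
From mathcomp Require Import lra.
Set Implicit Arguments. Unset Strict Implicit. Unset Printing Implicit Defensive.
Import Order.TTheory GRing.Theory Num.Theory.
Import numFieldNormedType.Exports.
Local Open Scope classical_set_scope.
Local Open Scope ring_scope.

(* Write g_t = flow(ln t) for the one-parameter group s |-> gdiag (e^s), so that
   g_t^l u(x) y is the flow at the discrete times l ln t.  Thicken K along the
   flow for one time step: K2 = {flow(r) z | 0 <= r <= ln t, z in K} is again a
   compact subset of Y \ Y'.  If the continuous orbit lies outside K2 at some
   time s in [k ln t, (k+1) ln t), then the discrete orbit point at step k lies
   outside K.  Hence the proportion of steps l <= M outside K dominates the
   proportion of times in [0, M ln t] outside K2, which the definition of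
   Div(y, Y', p) eventually bounds below by any number < p; dropping the step
   l = 0 costs only 1/M. *)

Lemma continuous_mx (T U : topologicalType) (m n : nat) (f : T -> 'M[U]_(m, n)) :
  (forall i j, continuous (fun t => f t i j)) -> continuous f.
Proof.
move=> fij t A [P P_nbhs sPA].
have : \forall s \near t, forall i j, P i j (f s i j).
  apply: filter_forall => i; apply: filter_forall => j.
  exact: fij (P_nbhs i j).
by apply: filterS => s Ps; exact: sPA.
Qed.

Lemma ge0_le_integral_nonmeasurable d (T : measurableType d) (R : realType)
  (mu : {measure set T -> \bar R}) (D : set T) (f g : T -> \bar R) :
  (forall x, D x -> (0 <= f x)%E) -> (forall x, D x -> (f x <= g x)%E) ->
  (\int[mu]_(x in D) f x <= \int[mu]_(x in D) g x)%E.
Proof.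
move=> f0 fg.
have g0 x : D x -> (0 <= g x)%E by move=> Dx; exact: le_trans (f0 x Dx) (fg x Dx).
rewrite (ge0_integralE _ f0) (ge0_integralE _ g0).
apply: ge_ereal_sup => _ [h hf <-]; apply: ereal_sup_ubound; exists h => // x.
apply: le_trans (hf x) _; rewrite /patch; case: ifP => // /[!inE] Dx; exact: fg.
Qed.

Lemma lt_limf_einf_near (R : realType) (T : choiceType) (X : filteredType T)
  (F : set_system X) {FF : Filter F} (f : X -> \bar R) (l : \bar R) :
  (l < limf_einf f F)%E -> \forall x \near F, (l < f x)%E.
Proof.
rewrite limf_einfE => /ereal_sup_gt[_ [V FV <-] l_inf].
apply: filterS FV => x Vx; apply: lt_le_trans l_inf _.
exact: ereal_inf_lbound (imageP _ Vx).
Qed.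

Lemma truncn_divr_itv (R : archiRealFieldType) (c s : R) : 0 < c -> 0 <= s ->
  (Num.truncn (s / c))%:R * c <= s < (Num.truncn (s / c)).+1%:R * c.
Proof.
move=> c0 s0; rewrite -ler_pdivlMr // -ltr_pdivrMr //.
exact: truncn_itv (divr_ge0 s0 (ltW c0)).
Qed.

Lemma integral_indic_le_count (R : realType) (c : R) (M : nat) (B : set R)
  (bad : set nat) : 0 < c ->
  (forall k s, k%:R * c <= s < k.+1%:R * c -> B s -> bad k) ->
  (\int[lebesgue_measure]_(s in [set s : R | (0 <= s <= M%:R * c)%R]) (\1_B s)%:E
    <= ((\sum_(k < M.+1) \1_bad k) * c)%:E)%E.
Proof.
move=> c0 B_bad.
set D := [set s : R | (0 <= s <= M%:R * c)%R].
pose F k := if pselect (bad k) then `[k%:R * c, k.+1%:R * c]%classic else set0.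
pose U := \big[setU/set0]_(k < M.+1) F k.
have mF k : measurable (F k).
  by rewrite /F; case: pselect => ?; [exact: measurable_itv | exact: measurable0].
have mU : measurable U by exact: bigsetU_measurable.
have mD : measurable D by rewrite /D -set_itvcc; exact: measurable_itv.
have BU s : D s -> B s -> U s.
  move=> /andP[s0 sM] Bs.
  have /andP[ks sk] := truncn_divr_itv c0 s0.
  rewrite /U -bigcup_mkord; exists (Num.truncn (s / c)).
    by rewrite /= ltnS -(ler_nat R) -(ler_pM2r c0) (le_trans ks).
  rewrite /F; case: pselect => [?|]; first by rewrite /= in_itv /= ks ltW.
  by move=> nbad; exfalso; apply: nbad (B_bad _ _ _ Bs); rewrite ks.
have measure_F k : lebesgue_measure (F k) = (\1_bad k * c)%:E.
  rewrite /F indicE; case: pselect => [badk|nbadk] /=.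
    rewrite mem_set // mul1r lebesgue_measure_itv /= lte_fin ltr_pM2r // ltr_nat ltnSn.
    by rewrite -EFinB mulrSr mulrDl mul1r addrAC subrr add0r.
  by rewrite memNset // mul0r measure0.
have le_BU : (\int[lebesgue_measure]_(s in D) (\1_B s)%:E
    <= \int[lebesgue_measure]_(s in D) (\1_U s)%:E)%E.
  apply: ge0_le_integral_nonmeasurable => s Ds; rewrite lee_fin !indicE //.
  case: (boolP (s \in B)) => [/set_mem/(BU s Ds) Us|_]; last by rewrite ler0n.
  by rewrite mem_set.
apply: le_trans le_BU _.
rewrite integral_indic //.
apply: le_trans (content_subadditive _ _ _ _) _.
- by move=> k _; exact: mF.
- exact: measurableI mU mD.
- by move=> s [Us _]; exact: Us.
rewrite (eq_bigr (fun k : 'I_M.+1 => (\1_bad k * c)%:E)); last by move=> k _; exact: measure_F.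
by rewrite sumEFin mulr_suml.
Qed.

(* Locked: if [gdiag] may be unfolded during matching, rewriting with matrix
   lemmas such as [mulmxA] diverges. *)
HB.lock Definition flow (R : realType) (m n : nat) (a : 'I_m -> R) (b : 'I_n -> R)
  (s : R) : 'M[R]_(m + n) := gdiag a b (expR s).

Section diagonal_flow.
Variables (R : realType) (m n : nat) (a : 'I_m -> R) (b : 'I_n -> R).

Local Notation flow := (flow a b).

Definition flow_rate (i : 'I_(m + n)) : R := row_mx (\row_i a i) (\row_j - b j) 0 i.

Lemma gdiag_expR_diagE s i :
  row_mx (\row_(i < m) (expR s `^ a i)) (\row_(j < n) (expR s `^ (- b j))) 0 i
  = expR (s * flow_rate i).
Proof.
rewrite /flow_rate; case: (splitP i) => k ik.
  have -> : i = lshift n k by exact: val_inj.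
  by rewrite !row_mxEl !mxE expRM.
have -> : i = rshift m k by exact: val_inj.
by rewrite !row_mxEr !mxE expRM.
Qed.

Lemma flowE s i j : flow s i j = (i == j)%:R * expR (s * flow_rate i).
Proof. by rewrite flow.unlock /gdiag mxE gdiag_expR_diagE mulr_natl. Qed.

Lemma flowD s r : flow (s + r) = flow s *m flow r.
Proof.
apply/matrixP => i j.
rewrite flowE [in X in X *m _]flow.unlock /gdiag mul_diag_mx mxE gdiag_expR_diagE flowE.
by rewrite mulrDl expRD mulrCA.
Qed.

Lemma flow0 : flow 0 = 1%:M.
Proof. by apply/matrixP => i j; rewrite flowE !mxE mul0r expR0 mulr1. Qed.

Lemma flowX s k : flow s ^+ k = flow (k%:R * s).
Proof.
elim: k => [|k IHk]; first by rewrite expr0 mul0r flow0.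
rewrite exprS IHk -mulmxE -flowD; congr flow.
by rewrite mulrSr mulrDl mul1r addrC.
Qed.

Lemma gdiag_flow t : 0 < t -> gdiag a b t = flow (ln t).
Proof. by move=> t0; rewrite flow.unlock lnK. Qed.

Lemma continuous_flow : continuous flow.
Proof.
apply: continuous_mx => i j.
have -> : (fun s => flow s i j) = (fun=> (i == j)%:R) \* (expR \o *%R (flow_rate i)).
  by apply: funext => s; rewrite flowE [s * _]mulrC.
move=> s; apply: continuousM; first exact: cst_continuous.
apply: continuous_comp; [exact: mulrl_continuous | exact: continuous_expR].
Qed.

Hypotheses (a_sum : \sum_i a i = 1) (b_sum : \sum_j b j = 1).

Lemma det_flow s : \det (flow s) = 1.
Proof.
rewrite flow.unlock /gdiag det_diag.
under eq_bigr do rewrite gdiag_expR_diagE.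
rewrite -expR_sum big_split_ord /= -!mulr_sumr.
have -> : \sum_(i < m) flow_rate (lshift n i) = 1.
  by rewrite -a_sum; apply: eq_bigr => i _; rewrite /flow_rate row_mxEl mxE.
have -> : \sum_(j < n) flow_rate (rshift m j) = -1.
  by rewrite -b_sum -sumrN; apply: eq_bigr => j _; rewrite /flow_rate row_mxEr mxE.
by rewrite mulr1 mulrN1 subrr expR0.
Qed.

End diagonal_flow.

Lemma SL_mul (R : realType) (d : nat) (g h : 'M[R]_d) : SL g -> SL h -> SL (g *m h).
Proof. by rewrite /SL /= det_mulmx => -> ->; rewrite mulr1. Qed.

Lemma SL_umat (R : realType) (m n : nat) (x : 'M[R]_(m, n)) : SL (umat x).
Proof. by rewrite /SL /umat /= det_ublock !det1 mulr1. Qed.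

Section flow_action.
Variables (R : realType) (m n : nat) (a : 'I_m -> R) (b : 'I_n -> R).
Hypotheses (a_sum : \sum_i a i = 1) (b_sum : \sum_j b j = 1).
Variables (Y : topologicalType) (act : 'M[R]_(m + n) -> Y -> Y).
Hypothesis act_SL : continuous_SL_action act.

Local Notation flow := (flow a b).

Lemma SL_flow s : SL (flow s).
Proof. exact: det_flow. Qed.

Lemma act_flowD s r z : act (flow s) (act (flow r) z) = act (flow (s + r)) z.
Proof. by case: act_SL => _ actM _; rewrite flowD actM //; exact: SL_flow. Qed.

Lemma act_flow_shift g s r z : SL g ->
  act (flow s *m g) z = act (flow (s - r)) (act (flow r *m g) z).
Proof.
case: act_SL => _ actM _ SLg.
rewrite -actM; [|exact: SL_flow|exact: SL_mul (SL_flow r) SLg].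
by rewrite mulmxA -flowD subrK.
Qed.

Lemma continuous_act_flow : continuous (fun sz : R * Y => act (flow sz.1) sz.2).
Proof.
case: act_SL => _ _ /subspace_continuousP act_cont [s z].
have flow_cvg : (fun sz : R * Y => (flow sz.1, sz.2)) @ nbhs (s, z) --> (flow s, z).
  apply: (@cvg_pair _ _ _ _ (nbhs (flow s)) (nbhs z)).
    exact: cvg_comp _ _ (@cvg_fst _ _ (nbhs s) (nbhs z) _) (@continuous_flow _ _ _ a b s).
  exact: (@cvg_snd _ _ (nbhs s) (nbhs z) _).
move=> W /= /(act_cont (flow s, z) (SL_flow s)) /flow_cvg.
by apply: (@filterS _ (nbhs (s, z))) => sz /=; apply; exact: SL_flow.
Qed.

Definition flow_tube (c : R) (K : set Y) : set Y :=
  (fun sz : R * Y => act (flow sz.1) sz.2) @` (`[0, c] `*` K).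

Lemma compact_flow_tube c K : compact K -> compact (flow_tube c K).
Proof.
move=> cK; apply: continuous_compact.
  exact/continuous_subspaceT/continuous_act_flow.
by apply: compact_setX; [exact: segment_compact | exact: cK].
Qed.

Lemma flow_tube_setC (Y' : set Y) c K :
  (forall g z, SL g -> Y' z -> Y' (act g z)) -> K `<=` ~` Y' ->
  flow_tube c K `<=` ~` Y'.
Proof.
move=> Y'_inv KY' _ [[r z] [_ Kz] <-] /= Y'rz; apply: (KY' z Kz).
have := Y'_inv _ _ (SL_flow (- r)) Y'rz.
by case: act_SL => act1 _ _; rewrite act_flowD addNr flow0 act1.
Qed.

Lemma flow_tube_orbit c K g z k s : SL g ->
  K (act (flow c ^+ k *m g) z) -> k%:R * c <= s <= k.+1%:R * c ->
  flow_tube c K (act (flow s *m g) z).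
Proof.
move=> SLg Kz /andP[ks sk]; rewrite (act_flow_shift _ (k%:R * c) _ SLg) -flowX.
exists (s - k%:R * c, act (flow c ^+ k *m g) z) => //; split => //=.
rewrite in_itv /= subr_ge0 ks /=; move: sk; rewrite mulrSr mulrDl mul1r; lra.
Qed.

End flow_action.

Lemma mean_tail_lower_bound (R : realFieldType) (M e q u0 S : R) :
  0 < M -> u0 <= 1 -> 1 < e * M -> q + e < M^-1 * (u0 + S) -> q <= M^-1 * S.
Proof.
move=> M0 u01 eM; rewrite mulrC ltr_pdivlMr // => mean_gt.
by rewrite mulrC ler_pdivlMr //; nra.
Qed.

Theorem lemma6p3 (R : realType) (m n : nat)
  (a : 'I_m -> R) (b : 'I_n -> R)
  (ha : forall i, 0 < a i) (hb : forall j, 0 < b j)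
  (hsa : \sum_i a i = 1) (hsb : \sum_j b j = 1)
  (Y : pseudoPMetricType R) (hY : hausdorff_space Y)
  (hlc : locally_compact [set: Y]) (hsc : @second_countable Y)
  (act : 'M[R]_(m + n) -> Y -> Y) (hact : continuous_SL_action act)
  (Y' : set Y) (hY'cl : closed Y')
  (hY'inv : forall g z, SL g -> Y' z -> Y' (act g z))
  (p q : R) (hq : 0 < q) (hqp : q < p) (hp : p <= 1)
  (y : Y) (hy : ~ Y' y) (x : 'M[R]_(m, n))
  (hx : Div a b act Y' y p x) :
  forall K : set Y, compact K -> K `<=` ~` Y' ->
  forall t : R, 1 < t ->
  exists N : nat, forall M : nat, (N < M)%N ->
    q <= M%:R^-1 * \sum_(1 <= l < M.+1)
           \1_(~` K) (act (gdiag a b t ^+ l *m umat x) y).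
Proof.
move=> K cK KY' t t1.
have c0 : 0 < ln t by rewrite ln_gt0.
rewrite gdiag_flow ?(lt_trans ltr01 t1) //; move: (ln t) c0 => c c0.
pose z k := act (flow a b c ^+ k *m umat x) y.
pose eps := (p - q) / 2.
have eps0 : 0 < eps by rewrite divr_gt0 // subr_gt0.
have tube := hx _ (compact_flow_tube (c := c) hsa hsb hact cK)
  (flow_tube_setC (c := c) hsa hsb hact hY'inv KY').
have q_eps : ((q + eps)%:E < p%:E)%E by rewrite lte_fin /eps; lra.
have [T0 [_ T0_ev]] := lt_limf_einf_near (lt_le_trans q_eps tube).
suff [N _ N_ev] : \forall M \near \oo,
    q <= M%:R^-1 * \sum_(1 <= l < M.+1) \1_(~` K) (z l).
  by exists N => M /ltnW /N_ev.
near=> M.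
have M_eps : eps^-1 < M%:R by near: M; exact: nbhs_infty_gtr.
have M_T0 : T0 < M%:R * c by rewrite -ltr_pdivrMr //; near: M; exact: nbhs_infty_gtr.
have M0 : 0 < M%:R :> R by apply: lt_trans M_eps; rewrite invr_gt0.
have bad_time k s : k%:R * c <= s < k.+1%:R * c ->
    ~ flow_tube a b act c K (act (gdiag a b (expR s) *m umat x) y) -> ~ K (z k).
  move=> /andP[ks sk] + Kz; apply; rewrite gdiag_flow ?expR_gt0 // expRK.
  by apply: (flow_tube_orbit hsa hsb hact (SL_umat x) Kz); rewrite ks ltW.
have Mc_inv0 : (0 <= ((M%:R * c)^-1)%:E)%E by rewrite lee_fin invr_ge0 mulr_ge0 // ltW.
have := lt_le_trans (T0_ev _ M_T0)
  (lee_wpmul2l Mc_inv0 (integral_indic_le_count M c0 bad_time)).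
rewrite -EFinM lte_fin invfM mulrACA mulVf ?gt_eqF // mulr1.
rewrite -(big_mkord xpredT) big_ltn //.
apply: mean_tail_lower_bound M0 _ _; first by rewrite indicE lern1 leq_b1.
by rewrite -(ltr_pM2l eps0) mulfV ?gt_eqF in M_eps.
Unshelve. all: end_near. Qed.
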